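(* Let $A\in\mathbb{R}^{n\times n}$ be Metzler, $J\in\mathbb{R}^{n\times n}$ nonnegative, $\bar T>0$, $d_s\in\mathbb{N}$, $\varepsilon>0$ and $\epsilon>0$. Assume there exist polynomial vectors $\zeta,\gamma:\mathbb{R}\to\mathbb{R}^n$ of degree at most $2d_s$ such that: (i) $\gamma$ is CSOS; (ii) $\zeta(\bar T)-\epsilon\mathbf{1}_n\ge0$; (iii) $-\zeta(\tau)^\top A+\dot\zeta(\tau)^\top-\tau(\bar T-\tau)\gamma(\tau)^\top$ is CSOS (as a polynomial row vector in $\tau$); (iv) $-\zeta(\bar T)^\top J+\zeta(0)^\top-\varepsilon\mathbf{1}_n^\top\ge0$. Then $\zeta(\bar T)\in\mathbb{R}^n_{>0}$, $\zeta(\tau)^\top A-\dot\zeta(\tau)^\top\le0$ for all $\tau\in[0,\bar T]$, $\zeta(\bar T)^\top J-\zeta(0)^\top+\varepsilon\mathbf{1}_n^\top\le0$, and the impulsive system $\dot x=Ax$ ($t\ne t_k$), $x(t_k^+)=Jx(t_k)$ is asymptotically stable under constant dwell-time $\bar T$ (i.e. $t_{k+1}-t_k=\bar T$ for all $k$).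
   Context: A univariate polynomial is a sum of squares (SOS) if it equals $\sum_i q_i(\tau)^2$ for some real polynomials $q_i$; a polynomial vector is componentwise SOS (CSOS) if each component is SOS. A matrix is Metzler if its off-diagonal entries are nonnegative and nonnegative if all its entries are. Vector inequalities are componentwise; $\mathbf{1}_n$ is the vector of ones. In the impulsive system $x(t^+)=\lim_{s\downarrow t}x(s)$, and asymptotic stability means global asymptotic stability of the zero solution. *)

From Stdlib Require Import Reals Lra List.
Open Scope R_scope.

(* Univariate real polynomials as coefficient lists, lowest degree first. *)
Definition rpoly : Type := list R.

Definition peval (p : rpoly) (x : R) : R :=
  fold_right (fun a acc => a + x * acc) 0 p.

Fixpoint pderiv_aux (k : nat) (p : rpoly) : rpoly :=
  match p with
  | nil => nil
  | a :: p' => (INR k * a) :: pderiv_aux (S k) p'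
  end.
Definition pderiv (p : rpoly) : rpoly :=
  match p with nil => nil | _ :: p' => pderiv_aux 1 p' end.

Definition deg_le (p : rpoly) (d : nat) : Prop := (length p <= S d)%nat.

Fixpoint rsum (n : nat) (f : nat -> R) : R :=
  match n with O => 0 | S m => rsum m f + f m end.

Definition is_SOS (f : R -> R) : Prop :=
  exists qs : list rpoly, forall t, f t = fold_right (fun q acc => (peval q t)^2 + acc) 0 qs.

(* vectors of R^n and n x n matrices, indices < n *)
Definition vec := nat -> R.
Definition mat := nat -> nat -> R.

Definition Metzler (n : nat) (A : mat) : Prop :=
  forall i j, (i < n)%nat -> (j < n)%nat -> i <> j -> 0 <= A i j.
Definition nonneg_mat (n : nat) (J : mat) : Prop :=
  forall i j, (i < n)%nat -> (j < n)%nat -> 0 <= J i j.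

Definition mat_vec (n : nat) (M : mat) (v : vec) : vec :=
  fun i => rsum n (fun j => M i j * v j).

Definition norm1 (n : nat) (v : vec) : R := rsum n (fun i => Rabs (v i)).

(* y solves  dy/dt = A y  (on all of R; linear ODE solutions are global) *)
Definition flow_sol (n : nat) (A : mat) (y : R -> vec) : Prop :=
  forall i t, (i < n)%nat ->
    derivable_pt_lim (fun s => y s i) t (mat_vec n A (y t) i).

(* x : [0,oo) -> R^n is a solution of the impulsive system
     xdot = A x  (t <> t_k),   x(t_k^+) = J x(t_k),
   with impulse times t_k = k*T (k >= 1), i.e. t_{k+1} - t_k = T, t_0 = 0,
   and initial condition x(0) = x0.  On each (t_k, t_{k+1}] the trajectory is
   the flow of A started (at t_k) from x0 (k = 0) or from J x(t_k) (k >= 1);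
   in particular x is left-continuous and x(t_k^+) = J x(t_k). *)
Definition impulsive_sol (n : nat) (A J : mat) (T : R) (x0 : vec) (x : R -> vec) : Prop :=
  (forall i, (i < n)%nat -> x 0 i = x0 i) /\
  forall k : nat, exists y : R -> vec,
    flow_sol n A y /\
    (forall i, (i < n)%nat ->
       y (INR k * T) i = (match k with O => x0 i | S _ => mat_vec n J (x (INR k * T)) i end)) /\
    (forall t i, (i < n)%nat -> INR k * T < t <= INR (S k) * T -> x t i = y t i).

Definition impulsive_GAS (n : nat) (A J : mat) (T : R) : Prop :=
  (forall eps, 0 < eps -> exists delta, 0 < delta /\
     forall x0 x, impulsive_sol n A J T x0 x -> norm1 n x0 < delta ->
       forall t, 0 <= t -> norm1 n (x t) < eps) /\
  (forall x0 x, impulsive_sol n A J T x0 x ->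
     forall eps, 0 < eps -> exists T0, forall t, T0 <= t -> norm1 n (x t) < eps).

From Stdlib Require Import Reals List Lra Lia Classical.
Open Scope R_scope.

(* The claims on [zeta] are immediate: SOS polynomials are nonnegative and
   [tau (Tbar - tau) gamma(tau)] is nonnegative on [[0, Tbar]].  For stability,
   [V(t, x) = zeta(Tbar - (t - t_k))^T |x|] is a copositive Lyapunov function on each dwell
   interval [(t_k, t_k + Tbar]].  First, [zeta] stays positive on [[0, Tbar]], since
   [zeta(0) > 0] and, as long as [zeta >= 0], the Metzler structure gives
   [zeta_i' >= A_ii zeta_i].  Then [V] is nonincreasing along the flow, because
   [d|x_i|/dt <= sum_j A_ij |x_j|] for a Metzler [A]; and at an impulse the nonnegativity of
   [J] and the margin [veps] give [V(t_(k+1)^+) <= q V(t_k^+)] with [q = Z / (Z + veps) < 1],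
   where [Z] bounds [zeta] on [[0, Tbar]].  So [|x(t)|] decays geometrically. *)

Lemma rsum_ext n f g : (forall i, (i < n)%nat -> f i = g i) -> rsum n f = rsum n g.
Proof.
  revert f g; induction n as [|n IH]; intros f g H; simpl; auto.
  rewrite (IH f g) by (intros; apply H; lia). rewrite (H n) by lia. reflexivity.
Qed.

Lemma rsum_le n f g : (forall i, (i < n)%nat -> f i <= g i) -> rsum n f <= rsum n g.
Proof.
  revert f g; induction n as [|n IH]; intros f g H; simpl; [lra|].
  assert (rsum n f <= rsum n g) by (apply IH; intros; apply H; lia).
  assert (f n <= g n) by (apply H; lia). lra.
Qed.

Lemma rsum_plus n f g : rsum n (fun i => f i + g i) = rsum n f + rsum n g.
Proof. induction n as [|n IH]; simpl; [ring | rewrite IH; ring]. Qed.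

Lemma rsum_scal n c f : rsum n (fun i => c * f i) = c * rsum n f.
Proof. induction n as [|n IH]; simpl; [ring | rewrite IH; ring]. Qed.

Lemma rsum_opp n f : rsum n (fun i => - f i) = - rsum n f.
Proof. induction n as [|n IH]; simpl; [ring | rewrite IH; ring]. Qed.

Lemma rsum_0 n : rsum n (fun _ => 0) = 0.
Proof. induction n as [|n IH]; simpl; [ring | rewrite IH; ring]. Qed.

Lemma rsum_comm n m (f : nat -> nat -> R) :
  rsum n (fun i => rsum m (fun j => f i j)) = rsum m (fun j => rsum n (fun i => f i j)).
Proof.
  induction n as [|n IH]; simpl.
  - symmetry; apply rsum_0.
  - rewrite IH, <- rsum_plus. reflexivity.
Qed.

Lemma rsum_colsum_le n (M : mat) c c' w : (forall j, (j < n)%nat -> 0 <= w j) ->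
  (forall j, (j < n)%nat -> rsum n (fun i => c i * M i j) <= c' j) ->
  rsum n (fun i => c i * rsum n (fun j => M i j * w j)) <= rsum n (fun j => c' j * w j).
Proof.
  intros Hw Hcol.
  replace (rsum n (fun i => c i * rsum n (fun j => M i j * w j)))
    with (rsum n (fun j => rsum n (fun i => c i * M i j) * w j)).
  - apply rsum_le. intros j Hj. apply Rmult_le_compat_r; [apply Hw | apply Hcol]; auto.
  - transitivity (rsum n (fun j => rsum n (fun i => c i * M i j * w j))).
    + apply rsum_ext. intros j _. rewrite Rmult_comm, <- rsum_scal. apply rsum_ext; intros; ring.
    + rewrite <- rsum_comm. apply rsum_ext. intros i _. rewrite <- rsum_scal.
      apply rsum_ext; intros; ring.
Qed.

Lemma rsum_nonneg n f : (forall i, (i < n)%nat -> 0 <= f i) -> 0 <= rsum n f.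
Proof. intros H. rewrite <- (rsum_0 n). apply rsum_le, H. Qed.

Lemma rsum_le_but_one n f g i c : (i < n)%nat ->
  (forall j, (j < n)%nat -> j <> i -> f j <= g j) -> f i <= g i + c ->
  rsum n f <= rsum n g + c.
Proof.
  revert f g; induction n as [|n IH]; intros f g Hi H Hc; [lia|]; simpl.
  destruct (Nat.eq_dec i n) as [->|Hne].
  - assert (rsum n f <= rsum n g) by (apply rsum_le; intros; apply H; lia). lra.
  - assert (rsum n f <= rsum n g + c) by (apply IH; [lia | intros; apply H; lia | exact Hc]).
    assert (f n <= g n) by (apply H; lia). lra.
Qed.

Lemma rsum_term_le n f i : (i < n)%nat ->
  (forall j, (j < n)%nat -> j <> i -> 0 <= f j) -> f i <= rsum n f.
Proof.
  revert f; induction n as [|n IH]; intros f Hi H; [lia|]; simpl.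
  destruct (Nat.eq_dec i n) as [->|Hne].
  - assert (0 <= rsum n f) by (apply rsum_nonneg; intros; apply H; lia). lra.
  - assert (f i <= rsum n f) by (apply IH; [lia | intros; apply H; lia]).
    assert (0 <= f n) by (apply H; lia). lra.
Qed.

Lemma rsum_triangle n f : Rabs (rsum n f) <= rsum n (fun i => Rabs (f i)).
Proof.
  induction n as [|n IH]; simpl; [rewrite Rabs_R0; lra|].
  eapply Rle_trans; [apply Rabs_triang | lra].
Qed.

Lemma derivable_pt_lim_rsum n (f : nat -> R -> R) f' x :
  (forall i, (i < n)%nat -> derivable_pt_lim (f i) x (f' i)) ->
  derivable_pt_lim (fun s => rsum n (fun i => f i s)) x (rsum n f').
Proof.
  revert f f'; induction n as [|n IH]; intros f f' H; simpl.
  - apply derivable_pt_lim_const.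
  - apply (derivable_pt_lim_plus (fun s => rsum n (fun i => f i s)) (f n));
      [apply IH; intros; apply H | apply H]; lia.
Qed.

Lemma fin_pos_lower_bound n (f : nat -> R) : (forall i, (i < n)%nat -> 0 < f i) ->
  exists m, 0 < m /\ forall i, (i < n)%nat -> m <= f i.
Proof.
  induction n as [|n IH]; intros H.
  - exists 1. split; [lra | intros; lia].
  - destruct IH as [m [Hm Hle]]; [intros; apply H; lia|].
    exists (Rmin m (f n)). split; [apply Rmin_pos; auto; apply H; lia|].
    intros i Hi. destruct (Nat.eq_dec i n) as [->|Hne]; [apply Rmin_r|].
    eapply Rle_trans; [apply Rmin_l | apply Hle; lia].
Qed.

Lemma fin_upper_bound n (f : nat -> R) :
  exists M, 0 <= M /\ forall i, (i < n)%nat -> f i <= M.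
Proof.
  induction n as [|n IH].
  - exists 0. split; [lra | intros; lia].
  - destruct IH as [M [HM Hle]]. exists (Rmax M (f n)).
    split; [eapply Rle_trans; [exact HM | apply Rmax_l]|].
    intros i Hi. destruct (Nat.eq_dec i n) as [->|Hne]; [apply Rmax_r|].
    eapply Rle_trans; [apply Hle; lia | apply Rmax_l].
Qed.

Lemma fin_right_nbhd n (P : nat -> R -> Prop) t :
  (forall i, (i < n)%nat -> exists h, 0 < h /\ forall s, t < s < t + h -> P i s) ->
  exists h, 0 < h /\ forall s, t < s < t + h -> forall i, (i < n)%nat -> P i s.
Proof.
  induction n as [|n IH]; intros H.
  - exists 1. split; [lra | intros; lia].
  - destruct IH as [h1 [Hh1 P1]]; [intros; apply H; lia|].
    destruct (H n) as [h2 [Hh2 P2]]; [lia|].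
    exists (Rmin h1 h2). split; [apply Rmin_pos; auto|].
    pose proof (Rmin_l h1 h2); pose proof (Rmin_r h1 h2).
    intros s Hs i Hi. destruct (Nat.eq_dec i n) as [->|Hne].
    + apply P2; lra.
    + apply P1; [lra | lia].
Qed.

Lemma continuous_induction (a b : R) (P : R -> Prop) : a <= b ->
  (forall t, a <= t <= b -> (forall s, a <= s < t -> P s) -> P t) ->
  (forall t, a <= t < b -> (forall s, a <= s <= t -> P s) ->
     exists h, 0 < h /\ forall s, t < s < t + h -> P s) ->
  forall t, a <= t <= b -> P t.
Proof.
  intros Hab Hleft Hright.
  set (E := fun x => a <= x <= b /\ forall s, a <= s <= x -> P s).
  assert (Pa : P a) by (apply Hleft; [lra | intros; lra]).
  assert (Ea : E a) by (split; [lra | intros s Hs; replace s with a by lra; exact Pa]).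
  assert (HE : bound E) by (exists b; intros x [Hx _]; lra).
  destruct (completeness E HE (ex_intro _ a Ea)) as [c [Hub Hlub]].
  assert (Hac : a <= c) by (apply Hub, Ea).
  assert (Hcb : c <= b) by (apply Hlub; intros x [Hx _]; lra).
  assert (Hbelow : forall s, a <= s < c -> P s).
  { intros s Hs. apply NNPP. intros HnP.
    enough (c <= s) by lra. apply Hlub. intros x [Hx HPx].
    destruct (Rle_lt_dec x s) as [|Hlt]; auto.
    exfalso. apply HnP, HPx. lra. }
  assert (Hupto : forall s, a <= s <= c -> P s).
  { intros s Hs. destruct (Req_dec s c) as [->|]; [apply Hleft; auto; lra|].
    apply Hbelow. lra. }
  destruct (Rle_lt_dec b c) as [Hbc|Hcb'].
  - intros t Ht. apply Hupto. lra.
  - exfalso. destruct (Hright c ltac:(lra) Hupto) as [h [Hh Hnext]].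
    pose proof (Rmin_l (c + h / 2) b); pose proof (Rmin_r (c + h / 2) b).
    assert (c < Rmin (c + h / 2) b) by (apply Rmin_glb_lt; lra).
    set (c' := Rmin (c + h / 2) b) in *.
    enough (c' <= c) by lra. apply Hub. split; [lra|].
    intros s Hs. destruct (Rle_lt_dec s c); [apply Hupto; lra | apply Hnext; lra].
Qed.

Lemma continuity_pt_pos_nbhd f t : continuity_pt f t -> 0 < f t ->
  exists h, 0 < h /\ forall s, Rabs (s - t) < h -> 0 < f s.
Proof.
  intros Hc Hp.
  destruct (Hc (f t) Hp) as [h [Hh Hclose]].
  exists h. split; auto. intros s Hs.
  destruct (Req_dec s t) as [->|Hne]; auto.
  assert (Hd : R_dist (f s) (f t) < f t) by (apply Hclose; repeat split; auto).
  unfold R_dist in Hd. apply Rabs_def2 in Hd. lra.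
Qed.

Lemma derivable_pt_lim_exp_scal a s :
  derivable_pt_lim (fun s => exp (a * s)) s (exp (a * s) * a).
Proof.
  rewrite <- (Rmult_1_r a) at 2.
  apply (derivable_pt_lim_comp (fun s => a * s) exp).
  - apply derivable_pt_lim_scal, derivable_pt_lim_id.
  - apply derivable_pt_lim_exp.
Qed.

Lemma exp_lower_bound f f' a t : 0 <= t ->
  (forall s, derivable_pt_lim f s (f' s)) -> (forall s, 0 < s < t -> a * f s <= f' s) ->
  exp (a * t) * f 0 <= f t.
Proof.
  intros Ht Hd Hf.
  destruct (Req_dec t 0) as [->|Ht0]; [rewrite Rmult_0_r, exp_0; lra|].
  set (g := fun s => f s * exp (- a * s)).
  set (g' := fun s => f' s * exp (- a * s) + f s * (exp (- a * s) * - a)).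
  assert (Hg : forall c, 0 <= c <= t -> derivable_pt_lim g c (g' c)).
  { intros c _. apply (derivable_pt_lim_mult f (fun s => exp (- a * s))).
    - apply Hd.
    - apply derivable_pt_lim_exp_scal. }
  destruct (MVT_cor2 g g' 0 t ltac:(lra) Hg) as [c [Heq Hc]].
  assert (Hg'c : 0 <= g' c).
  { unfold g'. pose proof (Hf c Hc). pose proof (exp_pos (- a * c)). nra. }
  assert (Hmono : g 0 <= g t) by nra.
  unfold g in Hmono. rewrite Rmult_0_r, exp_0, Rmult_1_r in Hmono.
  replace (f t) with (f t * exp (- a * t) * exp (a * t))
    by (rewrite Rmult_assoc, <- exp_plus; replace (- a * t + a * t) with 0 by ring;
        rewrite exp_0; ring).
  pose proof (exp_pos (a * t)). nra.
Qed.

Lemma le_of_le_plus_sqrt a b M : (forall d, 0 < d -> a <= b + M * sqrt d) -> a <= b.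
Proof.
  intros H. destruct (Rle_lt_dec M 0) as [HM|HM].
  - specialize (H 1 ltac:(lra)). rewrite sqrt_1 in H. lra.
  - apply Rnot_lt_le. intros Hlt.
    set (e := (a - b) / (2 * M)).
    assert (He : 0 < e) by (unfold e; apply Rdiv_lt_0_compat; lra).
    specialize (H (e * e) ltac:(nra)). rewrite sqrt_square in H by lra.
    unfold e in H. replace (M * ((a - b) / (2 * M))) with ((a - b) / 2) in H by (field; lra).
    lra.
Qed.

Lemma SOS_nonneg f : is_SOS f -> forall t, 0 <= f t.
Proof.
  intros [qs Hq] t. rewrite Hq. clear Hq.
  induction qs as [|q qs IH]; cbn [fold_right]; [lra|].
  pose proof (pow2_ge_0 (peval q t)). lra.
Qed.

Lemma peval_pderiv_aux p k x :
  peval (pderiv_aux k p) x = INR k * peval p x + x * peval (pderiv p) x.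
Proof.
  revert k; induction p as [|a p IH]; intros k; simpl; [ring|].
  rewrite IH. destruct p as [|b p]; [simpl; ring|].
  change (pderiv (b :: p)) with (pderiv_aux 1 p). rewrite (IH 1%nat), S_INR. simpl. ring.
Qed.

Lemma derivable_pt_lim_peval p x : derivable_pt_lim (peval p) x (peval (pderiv p) x).
Proof.
  revert x; induction p as [|a p IH]; intros x; simpl.
  - apply derivable_pt_lim_const.
  - replace (peval (pderiv_aux 1 p) x) with (0 + (1 * peval p x + x * peval (pderiv p) x))
      by (rewrite peval_pderiv_aux; simpl; ring).
    apply (derivable_pt_lim_plus (fun _ => a) (fun s => s * peval p s)).
    + apply derivable_pt_lim_const.
    + apply (derivable_pt_lim_mult id (peval p)); [apply derivable_pt_lim_id | apply IH].
Qed.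

Lemma Rabs_peval_le p x y : 0 <= x <= y ->
  0 <= peval (map Rabs p) y /\ Rabs (peval p x) <= peval (map Rabs p) y.
Proof.
  intros Hxy. induction p as [|a p [H1 H2]]; simpl; [rewrite Rabs_R0; lra|].
  pose proof (Rabs_pos a). pose proof (Rabs_pos (peval p x)).
  split; [nra|].
  eapply Rle_trans; [apply Rabs_triang|].
  rewrite Rabs_mult, (Rabs_right x) by lra. nra.
Qed.

Lemma nonneg_on_interval_of_SOS f g T tau :
  is_SOS (fun t => f t - t * (T - t) * g t) -> is_SOS g -> 0 <= tau <= T -> 0 <= f tau.
Proof.
  intros Hf Hg Htau. pose proof (SOS_nonneg _ Hf tau). pose proof (SOS_nonneg _ Hg tau).
  assert (0 <= tau * (T - tau) * g tau) by (apply Rmult_le_pos; [apply Rmult_le_pos|]; lra).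
  cbv beta in *. lra.
Qed.

Lemma peval_fin_upper_bound n (p : nat -> rpoly) T : 0 <= T ->
  exists Z, 0 <= Z /\ forall tau, 0 <= tau <= T -> forall i, (i < n)%nat -> peval (p i) tau <= Z.
Proof.
  intros HT. destruct (fin_upper_bound n (fun i => peval (map Rabs (p i)) T)) as [Z [HZ Hle]].
  exists Z. split; auto. intros tau Htau i Hi.
  destruct (Rabs_peval_le (p i) tau T Htau) as [_ Habs].
  pose proof (Rle_abs (peval (p i) tau)). pose proof (Hle i Hi). lra.
Qed.

Lemma Rabs_le_sqrt_sqr_plus y d : 0 <= d -> Rabs y <= sqrt (y ^ 2 + d).
Proof.
  intros Hd. rewrite <- sqrt_Rsqr_abs. apply sqrt_le_1_alt.
  unfold Rsqr. simpl. nra.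
Qed.

Lemma sqrt_sqr_plus_le y d : 0 <= d -> sqrt (y ^ 2 + d) <= Rabs y + sqrt d.
Proof.
  intros Hd. pose proof (sqrt_pos d). pose proof (Rabs_pos y).
  rewrite <- (sqrt_Rsqr (Rabs y + sqrt d)) by lra.
  apply sqrt_le_1_alt. unfold Rsqr.
  pose proof (sqrt_sqrt d Hd). pose proof (pow2_abs y).
  assert (0 <= Rabs y * sqrt d) by (apply Rmult_le_pos; lra).
  nra.
Qed.

Lemma smooth_abs_diag_le a y d : 0 < d ->
  a * y * y / sqrt (y ^ 2 + d) <= a * sqrt (y ^ 2 + d) + Rabs a * sqrt d.
Proof.
  intros Hd.
  set (u := sqrt (y ^ 2 + d)).
  assert (Hsd : 0 < sqrt d) by (apply sqrt_lt_R0; auto).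
  assert (Hud : sqrt d <= u) by (apply sqrt_le_1_alt; nra).
  assert (Huu : u * u = y ^ 2 + d) by (apply sqrt_sqrt; nra).
  assert (Hdd : sqrt d * sqrt d = d) by (apply sqrt_sqrt; lra).
  apply (Rmult_le_reg_r u); [lra|].
  unfold Rdiv. rewrite Rmult_assoc, Rinv_l, Rmult_1_r by lra.
  assert (- a <= Rabs a) by (rewrite <- Rabs_Ropp; apply RRle_abs).
  pose proof (Rabs_pos a).
  assert (d <= sqrt d * u) by nra.
  assert (- a * d <= Rabs a * (sqrt d * u)) by nra.
  nra.
Qed.

Lemma smooth_abs_offdiag_le a yj yi d : 0 < d -> 0 <= a ->
  a * yj * yi / sqrt (yi ^ 2 + d) <= a * sqrt (yj ^ 2 + d).
Proof.
  intros Hd Ha.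
  assert (Hu : 0 < sqrt (yi ^ 2 + d)) by (apply sqrt_lt_R0; nra).
  pose proof (Rabs_le_sqrt_sqr_plus yi d ltac:(lra)).
  pose proof (Rabs_le_sqrt_sqr_plus yj d ltac:(lra)).
  assert (yj * yi <= Rabs yj * Rabs yi) by (rewrite <- Rabs_mult; apply RRle_abs).
  assert (Rabs yj * Rabs yi <= sqrt (yj ^ 2 + d) * sqrt (yi ^ 2 + d))
    by (apply Rmult_le_compat; auto using Rabs_pos).
  apply (Rmult_le_reg_r (sqrt (yi ^ 2 + d))); auto.
  unfold Rdiv. rewrite Rmult_assoc, Rinv_l, Rmult_1_r by lra.
  nra.
Qed.

Definition wnorm1 (n : nat) (c v : vec) : R := rsum n (fun i => c i * Rabs (v i)).

(* [sabs d] is a smooth approximation of [Rabs] for [d > 0]; it is used because the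
   copositive Lyapunov function [wnorm1] is not differentiable where a coordinate vanishes. *)
Definition sabs (d x : R) : R := sqrt (x ^ 2 + d).

Lemma sabs_pos d x : 0 < d -> 0 < sabs d x.
Proof. intros Hd. apply sqrt_lt_R0. nra. Qed.

Lemma derivable_pt_lim_sabs d f x l : 0 < d -> derivable_pt_lim f x l ->
  derivable_pt_lim (fun s => sabs d (f s)) x (l * f x / sabs d (f x)).
Proof.
  intros Hd Hf. pose proof (sabs_pos d (f x) Hd).
  assert (Hsq : derivable_pt_lim (fun s => f s ^ 2 + d) x (l * f x + f x * l + 0)).
  { apply (derivable_pt_lim_plus (fun s => f s ^ 2) (fun _ => d)); [|apply derivable_pt_lim_const].
    apply (derivable_pt_lim_ext (fun s => f s * f s)); [intros; ring|].
    apply derivable_pt_lim_mult; exact Hf. }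
  replace (l * f x / sabs d (f x))
    with (/ (2 * sqrt (f x ^ 2 + d)) * (l * f x + f x * l + 0)) by (unfold sabs in *; field; lra).
  apply (derivable_pt_lim_comp (fun s => f s ^ 2 + d) sqrt); [exact Hsq|].
  apply derivable_pt_lim_sqrt. nra.
Qed.

Lemma metzler_sabs_deriv_le n A v d i : Metzler n A -> 0 < d -> (i < n)%nat ->
  mat_vec n A v i * v i / sabs d (v i)
  <= rsum n (fun j => A i j * sabs d (v j)) + Rabs (A i i) * sqrt d.
Proof.
  intros HM Hd Hi. pose proof (sabs_pos d (v i) Hd).
  replace (mat_vec n A v i * v i / sabs d (v i))
    with (rsum n (fun j => A i j * v j * v i / sabs d (v i))).
  - apply (rsum_le_but_one n _ _ i); auto.
    + intros j Hj Hji. apply smooth_abs_offdiag_le; auto.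
    + apply smooth_abs_diag_le; auto.
  - unfold mat_vec, Rdiv. rewrite Rmult_assoc, Rmult_comm, <- rsum_scal.
    apply rsum_ext. intros j _. ring.
Qed.

Lemma jump_start_pos n J c c0 veps : nonneg_mat n J -> 0 < veps ->
  (forall i, (i < n)%nat -> 0 <= c i) ->
  (forall j, (j < n)%nat -> rsum n (fun i => c i * J i j) - c0 j + veps <= 0) ->
  forall j, (j < n)%nat -> 0 < c0 j.
Proof.
  intros HJ Hveps Hc Hjump j Hj. pose proof (Hjump j Hj).
  assert (0 <= rsum n (fun i => c i * J i j))
    by (apply rsum_nonneg; intros i Hi; apply Rmult_le_pos; [apply Hc | apply HJ]; auto).
  lra.
Qed.

Lemma wnorm1_le_norm1 n c v Z : (forall i, (i < n)%nat -> c i <= Z) ->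
  wnorm1 n c v <= Z * norm1 n v.
Proof.
  intros Hc. unfold wnorm1, norm1. rewrite <- rsum_scal. apply rsum_le. intros i Hi.
  apply Rmult_le_compat_r; [apply Rabs_pos | apply Hc, Hi].
Qed.

Lemma norm1_le_wnorm1 n c v m : (forall i, (i < n)%nat -> m <= c i) ->
  m * norm1 n v <= wnorm1 n c v.
Proof.
  intros Hc. unfold wnorm1, norm1. rewrite <- rsum_scal. apply rsum_le. intros i Hi.
  apply Rmult_le_compat_r; [apply Rabs_pos | apply Hc, Hi].
Qed.

Lemma norm1_nonneg n v : 0 <= norm1 n v.
Proof. apply rsum_nonneg. intros; apply Rabs_pos. Qed.

Lemma flow_sol_shift n A y t0 : flow_sol n A y -> flow_sol n A (fun s => y (t0 + s)).
Proof.
  intros Hy i s Hi.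
  rewrite <- (Rmult_1_r (mat_vec n A (y (t0 + s)) i)).
  apply (derivable_pt_lim_comp (fun s => t0 + s) (fun t => y t i)); [|apply Hy, Hi].
  rewrite <- (Rplus_0_l 1).
  apply (derivable_pt_lim_plus (fun _ => t0) id);
    [apply derivable_pt_lim_const | apply derivable_pt_lim_id].
Qed.

Lemma derivable_pt_lim_reflect f f' T s : (forall x, derivable_pt_lim f x (f' x)) ->
  derivable_pt_lim (fun s => f (T - s)) s (- f' (T - s)).
Proof.
  intros Hf. replace (- f' (T - s)) with (f' (T - s) * (0 - 1)) by ring.
  apply (derivable_pt_lim_comp (fun s => T - s) f); [|apply Hf].
  apply (derivable_pt_lim_minus (fun _ => T) id);
    [apply derivable_pt_lim_const | apply derivable_pt_lim_id].
Qed.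

Section FlowDecrease.

Variables (n : nat) (A : mat) (z zd : nat -> R -> R) (T Z : R) (y : R -> vec).
Hypothesis HM : Metzler n A.
Hypothesis Hder : forall i s, (i < n)%nat -> derivable_pt_lim (z i) s (zd i s).
Hypothesis HD : forall tau, 0 <= tau <= T -> forall j, (j < n)%nat ->
  rsum n (fun i => z i tau * A i j) <= zd j tau.
Hypothesis Hz_nonneg : forall tau, 0 <= tau <= T -> forall i, (i < n)%nat -> 0 <= z i tau.
Hypothesis HZ : forall tau, 0 <= tau <= T -> forall i, (i < n)%nat -> z i tau <= Z.
Hypothesis Hy : flow_sol n A y.

Definition smooth_lyap d s := rsum n (fun i => z i (T - s) * sabs d (y s i)).

Definition smooth_lyap' d s := rsum n (fun i =>
  - zd i (T - s) * sabs d (y s i)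
  + z i (T - s) * (mat_vec n A (y s) i * y s i / sabs d (y s i))).

Lemma derivable_pt_lim_smooth_lyap d s : 0 < d ->
  derivable_pt_lim (smooth_lyap d) s (smooth_lyap' d s).
Proof.
  intros Hd. apply (derivable_pt_lim_rsum n (fun i s => z i (T - s) * sabs d (y s i))).
  intros i Hi. apply (derivable_pt_lim_mult (fun s => z i (T - s)) (fun s => sabs d (y s i))).
  - apply (derivable_pt_lim_reflect (z i) (zd i)). intros; apply Hder, Hi.
  - apply derivable_pt_lim_sabs; [exact Hd | apply Hy, Hi].
Qed.

(* By [HD] the [- zd] terms dominate the column sums [z^T A]; only the smoothing error
   on the diagonal survives. *)
Lemma smooth_lyap'_le d s : 0 < d -> 0 <= s <= T ->
  smooth_lyap' d s <= Z * rsum n (fun i => Rabs (A i i)) * sqrt d.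
Proof.
  intros Hd Hs. unfold smooth_lyap'.
  set (tau := T - s). assert (Htau : 0 <= tau <= T) by (unfold tau; lra).
  set (w j := sabs d (y s j)).
  apply Rle_trans with (rsum n (fun i => - (zd i tau * w i)
     + (z i tau * rsum n (fun j => A i j * w j) + z i tau * Rabs (A i i) * sqrt d))).
  { apply rsum_le. intros i Hi.
    pose proof (metzler_sabs_deriv_le n A (y s) d i HM Hd Hi). pose proof (Hz_nonneg tau Htau i Hi).
    unfold w. nra. }
  rewrite !rsum_plus, rsum_opp.
  assert (Hcol : rsum n (fun i => z i tau * rsum n (fun j => A i j * w j))
                 <= rsum n (fun j => zd j tau * w j)).
  { apply rsum_colsum_le; [intros; left; apply sabs_pos, Hd | intros; apply HD; auto]. }
  assert (Hdiag : rsum n (fun i => z i tau * Rabs (A i i) * sqrt d)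
                  <= Z * rsum n (fun i => Rabs (A i i)) * sqrt d).
  { replace (Z * rsum n (fun i => Rabs (A i i)) * sqrt d)
      with (rsum n (fun i => Z * Rabs (A i i) * sqrt d))
      by (rewrite (Rmult_comm Z), Rmult_assoc, Rmult_comm, <- !rsum_scal;
          apply rsum_ext; intros; ring).
    apply rsum_le. intros i Hi. pose proof (HZ tau Htau i Hi).
    pose proof (sqrt_pos d). pose proof (Rabs_pos (A i i)).
    apply Rmult_le_compat_r, Rmult_le_compat_r; auto. }
  lra.
Qed.

Lemma wnorm1_flow_decrease s : 0 <= s <= T ->
  wnorm1 n (fun i => z i (T - s)) (y s) <= wnorm1 n (fun i => z i T) (y 0).
Proof.
  intros Hs. set (K := Z * rsum n (fun i => Rabs (A i i))).
  apply (le_of_le_plus_sqrt _ _ (rsum n (fun i => z i T) + K * s)). intros d Hd.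
  assert (Hstart : wnorm1 n (fun i => z i (T - s)) (y s) <= smooth_lyap d s).
  { apply rsum_le. intros i Hi. apply Rmult_le_compat_l; [apply Hz_nonneg; auto; lra|].
    apply Rabs_le_sqrt_sqr_plus. lra. }
  assert (Hmvt : smooth_lyap d s <= smooth_lyap d 0 + K * sqrt d * s).
  { destruct (Req_dec s 0) as [->|Hs0]; [lra|].
    destruct (MVT_cor2 (smooth_lyap d) (smooth_lyap' d) 0 s ltac:(lra)
                (fun c _ => derivable_pt_lim_smooth_lyap d c Hd)) as [c [Heq Hc]].
    assert (HK := smooth_lyap'_le d c Hd ltac:(lra)). fold K in HK. nra. }
  assert (Hend : smooth_lyap d 0
                 <= wnorm1 n (fun i => z i T) (y 0) + rsum n (fun i => z i T) * sqrt d).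
  { unfold smooth_lyap, wnorm1. rewrite Rmult_comm, <- rsum_scal, <- rsum_plus.
    apply rsum_le. intros i Hi. rewrite Rminus_0_r.
    pose proof (Hz_nonneg T ltac:(lra) i Hi). pose proof (sqrt_sqr_plus_le (y 0 i) d ltac:(lra)).
    unfold sabs. nra. }
  lra.
Qed.

End FlowDecrease.

Section Positivity.

Variables (n : nat) (A : mat) (z zd : nat -> R -> R) (T : R).
Hypothesis HM : Metzler n A.
Hypothesis Hder : forall i s, (i < n)%nat -> derivable_pt_lim (z i) s (zd i s).
Hypothesis HD : forall tau, 0 <= tau <= T -> forall j, (j < n)%nat ->
  rsum n (fun i => z i tau * A i j) <= zd j tau.
Hypothesis Hz_start : forall i, (i < n)%nat -> 0 < z i 0.

Lemma diag_deriv_le s i : 0 <= s <= T -> (i < n)%nat ->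
  (forall j, (j < n)%nat -> 0 <= z j s) -> A i i * z i s <= zd i s.
Proof.
  intros Hs Hi Hpos. eapply Rle_trans; [|apply HD; auto].
  rewrite Rmult_comm. apply (rsum_term_le n (fun j => z j s * A j i)); auto.
  intros j Hj Hji. apply Rmult_le_pos; [apply Hpos, Hj | apply HM; auto].
Qed.

Lemma exp_diag_le t i : 0 <= t <= T -> (i < n)%nat ->
  (forall s, 0 <= s < t -> forall j, (j < n)%nat -> 0 <= z j s) ->
  exp (A i i * t) * z i 0 <= z i t.
Proof.
  intros Ht Hi Hpos. apply (exp_lower_bound (z i) (zd i)); [lra | intros; apply Hder, Hi|].
  intros s Hs. apply diag_deriv_le; auto; [lra|]. intros; apply Hpos; auto; lra.
Qed.

Lemma z_pos : 0 <= T -> forall t, 0 <= t <= T -> forall i, (i < n)%nat -> 0 < z i t.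
Proof.
  intros HT. apply (continuous_induction 0 T (fun t => forall i, (i < n)%nat -> 0 < z i t) HT).
  - intros t Ht Hbefore i Hi.
    assert (Hlow := exp_diag_le t i Ht Hi (fun s Hs j Hj => Rlt_le _ _ (Hbefore s Hs j Hj))).
    pose proof (exp_pos (A i i * t)). pose proof (Hz_start i Hi). nra.
  - intros t Ht Hupto. apply fin_right_nbhd. intros i Hi.
    assert (Hc : continuity_pt (z i) t)
      by (apply derivable_continuous_pt; exists (zd i t); apply Hder, Hi).
    destruct (continuity_pt_pos_nbhd (z i) t Hc (Hupto t ltac:(lra) i Hi)) as [h [Hh Hnear]].
    exists h. split; auto. intros s Hs. apply Hnear. rewrite Rabs_right; lra.
Qed.

Lemma z_lower_bound : 0 <= T ->
  exists m, 0 < m /\ forall tau, 0 <= tau <= T -> forall i, (i < n)%nat -> m <= z i tau.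
Proof.
  intros HT.
  destruct (fin_pos_lower_bound n (fun i => exp (- Rabs (A i i) * T) * z i 0)) as [m [Hm Hle]].
  { intros i Hi. apply Rmult_lt_0_compat; [apply exp_pos | apply Hz_start, Hi]. }
  exists m. split; auto. intros tau Htau i Hi.
  eapply Rle_trans; [apply Hle, Hi|].
  eapply Rle_trans; [|apply exp_diag_le; auto; intros; left; apply z_pos; auto; lra].
  apply Rmult_le_compat_r; [left; apply Hz_start, Hi|].
  assert (Hexp : - Rabs (A i i) * T <= A i i * tau).
  { assert (- A i i <= Rabs (A i i)) by (rewrite <- Rabs_Ropp; apply Rle_abs).
    pose proof (Rabs_pos (A i i)).
    assert (Rabs (A i i) * tau <= Rabs (A i i) * T) by (apply Rmult_le_compat_l; lra).
    nra. }
  destruct (Rle_lt_or_eq_dec _ _ Hexp) as [Hlt|Heq];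
    [left; apply exp_increasing, Hlt | rewrite Heq; lra].
Qed.

End Positivity.

(* The state [x(t_k^+)] right after the [k]-th impulse ([x0] for [k = 0]). *)
Definition impulse_state (n : nat) (J : mat) (T : R) (x0 : vec) (x : R -> vec) (k : nat) : vec :=
  match k with O => x0 | S _ => mat_vec n J (x (INR k * T)) end.

Section ImpulsiveDecay.

Variables (n : nat) (A J : mat) (z zd : nat -> R -> R) (T veps m Z : R).
Hypothesis HM : Metzler n A.
Hypothesis HJ : nonneg_mat n J.
Hypothesis HT : 0 < T.
Hypothesis Hveps : 0 < veps.
Hypothesis Hder : forall i s, (i < n)%nat -> derivable_pt_lim (z i) s (zd i s).
Hypothesis HD : forall tau, 0 <= tau <= T -> forall j, (j < n)%nat ->
  rsum n (fun i => z i tau * A i j) <= zd j tau.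
Hypothesis Hjump : forall j, (j < n)%nat ->
  rsum n (fun i => z i T * J i j) - z j 0 + veps <= 0.
Hypothesis Hm : 0 < m.
Hypothesis Hmz : forall tau, 0 <= tau <= T -> forall i, (i < n)%nat -> m <= z i tau.
Hypothesis HZ0 : 0 <= Z.
Hypothesis HzZ : forall tau, 0 <= tau <= T -> forall i, (i < n)%nat -> z i tau <= Z.

Definition rate := Z / (Z + veps).

Lemma rate_nonneg : 0 <= rate.
Proof. unfold rate. apply Rle_mult_inv_pos; lra. Qed.

Lemma rate_lt_1 : rate < 1.
Proof. unfold rate. apply (Rmult_lt_reg_r (Z + veps)); [lra|]. field_simplify; lra. Qed.

Lemma z_nonneg tau : 0 <= tau <= T -> forall i, (i < n)%nat -> 0 <= z i tau.
Proof. intros Htau i Hi. pose proof (Hmz tau Htau i Hi). lra. Qed.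

Lemma wnorm1_jump X :
  wnorm1 n (fun i => z i T) (mat_vec n J X) <= wnorm1 n (fun i => z i 0) X - veps * norm1 n X.
Proof.
  apply Rle_trans with (rsum n (fun i => z i T * rsum n (fun j => J i j * Rabs (X j)))).
  { apply rsum_le. intros i Hi. apply Rmult_le_compat_l; [apply z_nonneg; auto; lra|].
    eapply Rle_trans; [apply rsum_triangle|]. apply rsum_le. intros j Hj.
    rewrite Rabs_mult, (Rabs_right (J i j)) by (apply Rle_ge, HJ; auto). lra. }
  eapply Rle_trans.
  - apply (rsum_colsum_le n J _ (fun j => z j 0 - veps)); [intros; apply Rabs_pos|].
    intros j Hj. pose proof (Hjump j Hj). lra.
  - unfold wnorm1, norm1, Rminus. rewrite <- rsum_scal, <- rsum_opp, <- rsum_plus.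
    right. apply rsum_ext. intros; ring.
Qed.

(* Since [z 0 <= Z], the loss [veps * norm1 X] is at least the fraction [veps / (Z + veps)]
   of [wnorm1 (z 0) X]. *)
Lemma wnorm1_jump_contract X :
  wnorm1 n (fun i => z i T) (mat_vec n J X) <= rate * wnorm1 n (fun i => z i 0) X.
Proof.
  eapply Rle_trans; [apply wnorm1_jump|].
  assert (HPN : wnorm1 n (fun i => z i 0) X <= Z * norm1 n X)
    by (apply wnorm1_le_norm1; intros; apply HzZ; auto; lra).
  pose proof (norm1_nonneg n X).
  set (P := wnorm1 n (fun i => z i 0) X) in *. set (N := norm1 n X) in *.
  unfold rate. apply (Rmult_le_reg_r (Z + veps)); [lra|].
  replace (Z / (Z + veps) * P * (Z + veps)) with (Z * P) by (field; lra).
  nra.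
Qed.

Lemma wnorm1_dwell x0 x k t : impulsive_sol n A J T x0 x ->
  INR k * T < t <= INR (S k) * T ->
  wnorm1 n (fun i => z i (T - (t - INR k * T))) (x t)
  <= wnorm1 n (fun i => z i T) (impulse_state n J T x0 x k).
Proof.
  intros [_ Hpieces] Ht. destruct (Hpieces k) as [y [Hy [Hy0 Hyx]]].
  rewrite S_INR in Ht.
  assert (Hdec := wnorm1_flow_decrease n A z zd T Z (fun s => y (INR k * T + s)) HM Hder HD
                    z_nonneg HzZ (flow_sol_shift n A y _ Hy) (t - INR k * T) ltac:(lra)).
  cbv beta in Hdec. rewrite Rplus_0_r in Hdec.
  replace (INR k * T + (t - INR k * T)) with t in Hdec by ring.
  eapply Rle_trans; [|eapply Rle_trans; [exact Hdec|]]; right; apply rsum_ext; intros i Hi.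
  - rewrite (Hyx t i Hi); [reflexivity | rewrite S_INR; lra].
  - rewrite (Hy0 i Hi). destruct k; reflexivity.
Qed.

Lemma wnorm1_impulse_state x0 x k : impulsive_sol n A J T x0 x ->
  wnorm1 n (fun i => z i T) (impulse_state n J T x0 x k)
  <= rate ^ k * wnorm1 n (fun i => z i T) x0.
Proof.
  intros Hsol. induction k as [|k IH]; [simpl; lra|].
  assert (Hend := wnorm1_dwell x0 x k (INR (S k) * T) Hsol).
  replace (T - (INR (S k) * T - INR k * T)) with 0 in Hend by (rewrite S_INR; ring).
  eapply Rle_trans; [apply wnorm1_jump_contract|].
  simpl pow. rewrite Rmult_assoc. apply Rmult_le_compat_l; [apply rate_nonneg|].
  apply Rle_trans with (2 := IH). apply Hend. rewrite S_INR. lra.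
Qed.

Lemma impulsive_decay x0 x k t : impulsive_sol n A J T x0 x ->
  INR k * T < t <= INR (S k) * T -> m * norm1 n (x t) <= rate ^ k * (Z * norm1 n x0).
Proof.
  intros Hsol Ht. assert (Htau : 0 <= T - (t - INR k * T) <= T) by (rewrite S_INR in Ht; lra).
  eapply Rle_trans;
    [apply (norm1_le_wnorm1 n (fun i => z i (T - (t - INR k * T)))); intros; apply Hmz; auto|].
  eapply Rle_trans; [apply (wnorm1_dwell x0 x k t Hsol Ht)|].
  eapply Rle_trans; [apply wnorm1_impulse_state, Hsol|].
  apply Rmult_le_compat_l; [apply pow_le, rate_nonneg|].
  apply wnorm1_le_norm1. intros; apply HzZ; auto; lra.
Qed.

End ImpulsiveDecay.

Lemma dwell_index T t : 0 < T -> 0 < t -> exists k, INR k * T < t <= INR (S k) * T.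
Proof.
  intros HT Ht.
  destruct (archimed_cor1 (T / t) ltac:(apply Rdiv_lt_0_compat; lra)) as [N [HN HN0]].
  assert (HNp : 0 < INR N) by (apply lt_0_INR; lia).
  assert (HtN : t <= INR N * T).
  { apply Rlt_le. apply (Rmult_lt_compat_r (t * INR N)) in HN; [|nra].
    replace (/ INR N * (t * INR N)) with t in HN by (field; lra).
    replace (T / t * (t * INR N)) with (INR N * T) in HN by (field; lra). exact HN. }
  clear HN HN0 HNp. induction N as [|N IH].
  - simpl in HtN. lra.
  - destruct (Rle_lt_dec t (INR N * T)) as [Hle|Hlt]; [apply IH, Hle | exists N; lra].
Qed.

Section GeometricDecay.

Variables (n : nat) (A J : mat) (T m q Z : R).
Hypothesis HT : 0 < T.
Hypothesis Hm : 0 < m.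
Hypothesis Hq0 : 0 <= q.
Hypothesis Hq1 : q < 1.
Hypothesis HZ : 0 <= Z.
Hypothesis Hdecay : forall x0 x k t, impulsive_sol n A J T x0 x ->
  INR k * T < t <= INR (S k) * T -> m * norm1 n (x t) <= q ^ k * (Z * norm1 n x0).

Lemma impulsive_norm1_bound x0 x t : impulsive_sol n A J T x0 x -> 0 <= t ->
  m * norm1 n (x t) <= Rmax m Z * norm1 n x0.
Proof.
  intros Hsol Ht. pose proof (norm1_nonneg n x0).
  destruct (Req_dec t 0) as [->|Ht0].
  - destruct Hsol as [Hx0 _].
    replace (norm1 n (x 0)) with (norm1 n x0) by (apply rsum_ext; intros i Hi; rewrite Hx0; auto).
    apply Rmult_le_compat_r; [auto | apply Rmax_l].
  - destruct (dwell_index T t HT ltac:(lra)) as [k Hk].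
    eapply Rle_trans; [apply (Hdecay x0 x k t Hsol Hk)|].
    assert (q ^ k <= 1) by (rewrite <- (pow1 k); apply pow_incr; lra).
    pose proof (pow_le q k Hq0). pose proof (Rmax_r m Z).
    assert (0 <= Z * norm1 n x0) by (apply Rmult_le_pos; lra). nra.
Qed.

Lemma impulsive_stable : forall eps, 0 < eps -> exists delta, 0 < delta /\
  forall x0 x, impulsive_sol n A J T x0 x -> norm1 n x0 < delta ->
  forall t, 0 <= t -> norm1 n (x t) < eps.
Proof.
  intros eps Heps. set (C := Rmax m Z).
  assert (HC : 0 < C) by (unfold C; eapply Rlt_le_trans; [exact Hm | apply Rmax_l]).
  exists (eps * m / C). split; [apply Rdiv_lt_0_compat; nra|].
  intros x0 x Hsol Hx0 t Ht.
  pose proof (impulsive_norm1_bound x0 x t Hsol Ht).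
  assert (C * norm1 n x0 < eps * m).
  { apply (Rmult_lt_compat_l C) in Hx0; [|exact HC].
    replace (C * (eps * m / C)) with (eps * m) in Hx0 by (field; lra). exact Hx0. }
  unfold C in *. apply (Rmult_lt_reg_l m); lra.
Qed.

Lemma impulsive_attractive : forall x0 x, impulsive_sol n A J T x0 x ->
  forall eps, 0 < eps -> exists T0, forall t, T0 <= t -> norm1 n (x t) < eps.
Proof.
  intros x0 x Hsol eps Heps. set (N0 := Z * norm1 n x0).
  assert (HN0 : 0 <= N0) by (apply Rmult_le_pos; [exact HZ | apply norm1_nonneg]).
  set (c := eps * m / (N0 + 1)).
  assert (Hc : 0 < c) by (apply Rdiv_lt_0_compat; nra).
  destruct (pow_lt_1_zero q ltac:(rewrite Rabs_right; lra) c Hc) as [K HK].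
  exists (INR (S K) * T). intros t Ht.
  assert (HSK : 0 < INR (S K)) by (apply lt_0_INR; lia).
  destruct (dwell_index T t HT ltac:(nra)) as [k Hk].
  assert (HkK : (K <= k)%nat).
  { assert (Hle : INR (S K) <= INR (S k)) by (apply (Rmult_le_reg_r T); lra).
    apply INR_le in Hle. lia. }
  specialize (HK k HkK). rewrite Rabs_right in HK by (apply Rle_ge, pow_le; lra).
  assert (Hx := Hdecay x0 x k t Hsol Hk). fold N0 in Hx. pose proof (pow_le q k Hq0).
  assert (q ^ k * N0 <= q ^ k * (N0 + 1)) by nra.
  assert (q ^ k * (N0 + 1) < c * (N0 + 1)) by (apply Rmult_lt_compat_r; lra).
  assert (c * (N0 + 1) = eps * m) by (unfold c; field; lra).
  apply (Rmult_lt_reg_l m); lra.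
Qed.

Lemma impulsive_GAS_of_geometric_decay : impulsive_GAS n A J T.
Proof. split; [exact impulsive_stable | exact impulsive_attractive]. Qed.

End GeometricDecay.

Theorem proposition6 (n : nat) (A J : mat) (Tbar : R) (ds : nat) (veps eps : R)
  (zeta gamma : nat -> rpoly) :
  Metzler n A -> nonneg_mat n J -> 0 < Tbar -> 0 < veps -> 0 < eps ->
  (forall i, (i < n)%nat -> deg_le (zeta i) (2 * ds) /\ deg_le (gamma i) (2 * ds)) ->
  (forall i, (i < n)%nat -> is_SOS (peval (gamma i))) ->
  (forall i, (i < n)%nat -> peval (zeta i) Tbar - eps >= 0) ->
  (forall j, (j < n)%nat -> is_SOS (fun tau =>
      - rsum n (fun i => peval (zeta i) tau * A i j) + peval (pderiv (zeta j)) tau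
      - tau * (Tbar - tau) * peval (gamma j) tau)) ->
  (forall j, (j < n)%nat ->
      - rsum n (fun i => peval (zeta i) Tbar * J i j) + peval (zeta j) 0 - veps >= 0) ->
  (forall i, (i < n)%nat -> 0 < peval (zeta i) Tbar) /\
  (forall tau, 0 <= tau <= Tbar -> forall j, (j < n)%nat ->
      rsum n (fun i => peval (zeta i) tau * A i j) - peval (pderiv (zeta j)) tau <= 0) /\
  (forall j, (j < n)%nat ->
      rsum n (fun i => peval (zeta i) Tbar * J i j) - peval (zeta j) 0 + veps <= 0) /\
  impulsive_GAS n A J Tbar.
Proof.
  intros HM HJ HT Hveps Heps _ Hgamma HzT Hcert Hjump.
  assert (HzT' : forall i, (i < n)%nat -> 0 < peval (zeta i) Tbar)
    by (intros i Hi; specialize (HzT i Hi); lra).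
  assert (Hflow : forall tau, 0 <= tau <= Tbar -> forall j, (j < n)%nat ->
      rsum n (fun i => peval (zeta i) tau * A i j) - peval (pderiv (zeta j)) tau <= 0)
    by (intros tau Htau j Hj;
        pose proof (nonneg_on_interval_of_SOS _ _ Tbar tau (Hcert j Hj) (Hgamma j Hj) Htau); lra).
  assert (Hjump' : forall j, (j < n)%nat ->
      rsum n (fun i => peval (zeta i) Tbar * J i j) - peval (zeta j) 0 + veps <= 0)
    by (intros j Hj; specialize (Hjump j Hj); lra).
  split; [exact HzT' | split; [exact Hflow | split; [exact Hjump' |]]].
  set (z i := peval (zeta i)). set (zd i := peval (pderiv (zeta i))).
  assert (Hder : forall i s, (i < n)%nat -> derivable_pt_lim (z i) s (zd i s))
    by (intros; apply derivable_pt_lim_peval).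
  assert (HD : forall tau, 0 <= tau <= Tbar -> forall j, (j < n)%nat ->
      rsum n (fun i => z i tau * A i j) <= zd j tau)
    by (intros tau Htau j Hj; specialize (Hflow tau Htau j Hj); unfold z, zd; lra).
  assert (Hz0 := jump_start_pos n J (fun i => z i Tbar) (fun i => z i 0) veps HJ Hveps
                  (fun i Hi => Rlt_le _ _ (HzT' i Hi)) Hjump').
  destruct (z_lower_bound n A z zd Tbar HM Hder HD Hz0 ltac:(lra)) as [m [Hm Hmz]].
  destruct (peval_fin_upper_bound n zeta Tbar ltac:(lra)) as [Z [HZ0 HzZ]].
  apply (impulsive_GAS_of_geometric_decay n A J Tbar m (rate veps Z) Z);
    auto using rate_nonneg, rate_lt_1.
  intros x0 x k t. apply (impulsive_decay n A J z zd Tbar veps m Z); auto.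
Qed.
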